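(* Let $G_0$ be a non-abelian finite simple group and let $(G_n)_{n\geq1}$ be a sequence of finite groups such that every finite group is isomorphic to a subgroup of at least one $G_n$. Then the family of all finite groups $\Gamma$ that are extensions of $G_0^N$ by $G_n$ (indexed by $n\ge1$ and $N\ge1$) satisfies property (RÉAL): for every finite group $G$ there exist integers $n\ge1$, $N\ge1$, a group $\Gamma$ fitting in an exact sequence $1\to G_0^N\to\Gamma\to G_n\to1$, and a subgroup $H\le\Gamma$ with $N_\Gamma(H)/H\cong G$.
   Context: A group $\Gamma$ is called an extension of a group $N$ by a group $H$ if there is an exact sequence $1\to N\to\Gamma\to H\to1$. A family $\{\Gamma_i\}_{i}$ of finite groups satisfies property (RÉAL) if for every finite group $G$ there exist an index $i$ and a subgroup $H$ of $\Gamma_i$ with $N_{\Gamma_i}(H)/H\cong G$, where $N_{\Gamma_i}(H)$ is the normalizer of $H$ in $\Gamma_i$. *)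

From HB Require Import structures.
From mathcomp Require Import all_boot all_order all_fingroup all_solvable.
Set Implicit Arguments. Unset Strict Implicit. Unset Printing Implicit Defensive.

(* The external direct power gT^N, i.e. functions 'I_N -> gT with pointwise
   multiplication (finGroupType instance from mathcomp's gproduct.v). *)
Definition gpow (gT : finGroupType) (N : nat) : finGroupType :=
  {dffun forall i : 'I_N, (fun _ : 'I_N => gT) i}.

(* Let K be a subgroup of G_n isomorphic to G, and let Gamma be the regular
   wreath product G_0^(G_n) >< G_n, where G_n acts on functions by right
   translation.  Take H to be the subgroup of the base made of the functions
   that are constant on every right coset of K other than K itself (and
   arbitrary on K).  Right translation by elements of K preserves H;
   conversely, if an element f k of Gamma normalises H, testing it against
   indicator-like functions in H shows that k lies in K (this needs K <> 1 and
   G_0 <> 1) and that the values of f on a coset of K differ by central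
   elements of G_0, hence agree (this needs Z(G_0) = 1).  Thus
   N_Gamma(H) = H >< K and N_Gamma(H)/H is isomorphic to K.  When K = 1 one
   simply takes H = Gamma. *)

From HB Require Import structures.
From mathcomp Require Import all_boot all_order all_fingroup all_solvable.
Set Implicit Arguments. Unset Strict Implicit. Unset Printing Implicit Defensive.
Local Open Scope group_scope.

Lemma simple_nonabelian_center1 (gT : finGroupType) :
  simple [set: gT] -> ~~ abelian [set: gT] -> 'Z([set: gT]) = 1.
Proof.
move=> /simpleP[_ /(_ 'Z([set: gT])%G (center_normal _))] [//|].
by move/center_idP=> abT; rewrite abT.
Qed.

Lemma nonabelian_nontrivial (gT : finGroupType) (G : {group gT}) :
  ~~ abelian G -> G :!=: 1.
Proof. by apply: contraNneq => ->; apply: abelian1. Qed.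

Section RegularWreath.

Variables (aT kT : finGroupType).

Definition wfun : finGroupType := {dffun forall k : kT, (fun _ : kT => aT) k}.

Definition rshift (f : wfun) (k : kT) : wfun := [ffun x => f (x * k^-1)].

Lemma rshiftE (f : wfun) k x : rshift f k x = f (x * k^-1).
Proof. by rewrite ffunE. Qed.

Lemma conjg_wfunE (f g : wfun) x : (f ^ g) x = f x ^ g x.
Proof. by rewrite /conjg !ffunE. Qed.

Lemma rshift1 : rshift^~ 1 =1 id.
Proof. by move=> f; apply/ffunP=> x; rewrite ffunE invg1 mulg1. Qed.

Lemma rshiftM f : act_morph rshift f.
Proof. by move=> a b; apply/ffunP=> x; rewrite !ffunE invMg mulgA. Qed.

Canonical rshift_action := TotalAction rshift1 rshiftM.

Lemma rshift_is_groupAction : is_groupAction [set: wfun] rshift_action.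
Proof.
move=> a _; rewrite inE; apply/andP; split; first by apply/subsetP=> x /[1!inE].
by apply/morphicP=> f g _ _; rewrite !actpermE; apply/ffunP=> x; rewrite !ffunE.
Qed.

Canonical rshift_groupAction := GroupAction rshift_is_groupAction.

Definition wreath := sdprod_by rshift_groupAction.

Local Notation base := (sdpair1 rshift_groupAction).
Local Notation top := (sdpair2 rshift_groupAction).

Lemma wfun_isog_gpow : [set: wfun] \isog [set: gpow aT #|kT|].
Proof.
apply/isog_symr/isogP.
pose reindex (g : gpow aT #|kT|) : wfun := [ffun x => g (enum_rank x)].
have reindexM : {in setT &, {morph reindex : g h / g * h}}.
  by move=> g h _ _; apply/ffunP=> x; rewrite !ffunE.
exists (Morphism reindexM).
  apply/injmP=> g h _ _ eq_gh; apply/ffunP=> i.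
  by have := congr1 (fun f : wfun => f (enum_val i)) eq_gh; rewrite /= !ffunE enum_valK.
apply/eqP; rewrite eqEsubset subsetT; apply/subsetP=> f _; apply/morphimP.
exists ([ffun i => f (enum_val i)] : gpow aT #|kT|); rewrite ?inE //.
by apply/ffunP=> x; rewrite /= !ffunE enum_rankK.
Qed.

Lemma wreath_base_normal : base @* setT <| [set: wreath].
Proof. by case/sdprod_context: (sdprod_sdpair rshift_groupAction). Qed.

Lemma wreath_base_isog_gpow : base @* setT \isog [set: gpow aT #|kT|].
Proof.
apply: isog_trans wfun_isog_gpow.
exact/isog_symr/sub_isog/injm_sdpair1/subsetT.
Qed.

Lemma wreath_quotient_base_isog : [set: wreath] / base @* setT \isog [set: kT].
Proof.
apply: isog_trans (isog_symr (sdprod_isog (sdprod_sdpair _))) _.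
exact/isog_symr/sub_isog/injm_sdpair2/subsetT.
Qed.

Lemma mem_base_morphim (A : {set wfun}) f : (base f \in base @* A) = (f \in A).
Proof.
by rewrite -{2}(injmK (injm_sdpair1 rshift_groupAction) (subsetT A)) !inE.
Qed.

Variable K : {group kT}.

Definition coset_const : {set wfun} :=
  [set f : wfun | [forall x, forall z,
                    (x \notin K) ==> (z * x^-1 \in K) ==> (f x == f z)]].

Lemma coset_constP (f : wfun) :
  reflect (forall x z, x \notin K -> z * x^-1 \in K -> f x = f z)
          (f \in coset_const).
Proof.
rewrite inE; apply: (iffP forallP) => [cf x z xK zx | cf x].
  by move: (forallP (cf x) z); rewrite xK zx => /eqP.
by apply/forallP=> z; apply/implyP=> xK; apply/implyP=> zx; apply/eqP/cf.
Qed.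

Lemma group_set_coset_const : group_set coset_const.
Proof.
apply/group_setP; split; first by apply/coset_constP=> x z _ _; rewrite !ffunE.
move=> f g /coset_constP cf /coset_constP cg; apply/coset_constP=> x z xK zx.
by rewrite !ffunE (cf x z) // (cg x z).
Qed.

Canonical coset_const_group := Group group_set_coset_const.

Lemma rshift_coset_const (f : wfun) a :
  a \in K -> f \in coset_const -> rshift f a \in coset_const.
Proof.
move=> Ka /coset_constP cf; apply/coset_constP=> x z xK zx; rewrite !rshiftE.
apply: cf; last by rewrite invMg invgK mulgA mulgKV.
by apply: contra xK => xaK; rewrite -(mulgKV a x) groupM.
Qed.

Lemma top_norm_coset_const : top @* K \subset 'N(base @* coset_const).
Proof.
apply/subsetP=> _ /morphimP[a _ Ka ->].
rewrite inE -sdpair_setact ?inE ?subsetT //; apply: morphimS.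
by apply/subsetP=> _ /imsetP[f cf ->]; apply: rshift_coset_const.
Qed.

Definition norm_shift_conj (a : kT) (g : wfun) :=
  forall f, f \in coset_const -> rshift f a ^ g \in coset_const.

Lemma norm_shift_conj_mem u :
  u \in 'N(base @* coset_const) -> norm_shift_conj u.1 u.2.
Proof.
move=> Nu f cf; rewrite -mem_base_morphim.
have -> : base (rshift f u.1 ^ u.2) = (base f ^ top u.1) ^ base u.2.
  by rewrite (morphJ (sdpair1_morphism _)) ?inE //= -sdpair_act ?inE.
by rewrite -conjgM -sdpairE memJ_norm // mem_base_morphim.
Qed.

Hypotheses (Z1 : 'Z([set: aT]) = 1) (ntA : [set: aT] :!=: 1) (ntK : K :!=: 1).

(* Test against the function equal to x at 1 and trivial elsewhere. *)
Lemma norm_shift_conj_inK a g : norm_shift_conj a g -> a \in K.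
Proof.
move=> Nag; apply: contraT => aK.
have [x _ ntx] := trivgPn _ ntA; have [y Ky nty] := trivgPn _ ntK.
pose f : wfun := [ffun z => if z == 1 then x else 1].
have cf : f \in coset_const.
  apply/coset_constP=> z w zK wz; rewrite !ffunE.
  have -> : (z == 1) = false by apply: contraNF zK => /eqP ->.
  by case: eqP wz => // ->; rewrite mul1g groupV (negbTE zK).
move/coset_constP: (Nag f cf) => /(_ a (y * a) aK); rewrite mulgK => /(_ Ky).
rewrite !conjg_wfunE !rshiftE mulgV mulgK !ffunE eqxx (negbTE nty) conj1g.
by move/eqP; rewrite conjg_eq1 (negbTE ntx).
Qed.

(* Test against the function that is x on the coset K w and trivial elsewhere:
   conjugation by g must act on x identically at w and at any z in K w. *)
Lemma norm_shift_conj_coset_const a g :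
  a \in K -> norm_shift_conj a g -> g \in coset_const.
Proof.
move=> Ka Nag; apply/coset_constP=> w z wK zw.
suff: g w * (g z)^-1 \in 'Z([set: aT]).
  by rewrite Z1 => /set1P/eqP; rewrite mulg_eq1 => /eqP->; rewrite invgK.
apply/centerP; split=> [|x _]; first by rewrite inE.
pose f : wfun := [ffun v => if v * w^-1 \in K then x else 1].
have cf : f \in coset_const.
  apply/coset_constP=> v v' vK vv'; rewrite !ffunE.
  suff -> : (v' * w^-1 \in K) = (v * w^-1 \in K) by [].
  by rewrite -(mulgKV v v') -mulgA groupMl.
have := Nag _ (rshift_coset_const (groupVr Ka) cf).
rewrite -rshiftM mulVg rshift1 => /coset_constP /(_ w z wK zw).
rewrite !conjg_wfunE !ffunE mulgV group1 zw => xgw.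
have fix_x : x ^ (g w * (g z)^-1) = x by rewrite conjgM xgw -conjgM mulgV conjg1.
by rewrite /commute -{1}fix_x /conjg !mulgA mulgV mul1g.
Qed.

Lemma norm_coset_const_sdprod :
  base @* coset_const ><| top @* K = 'N_[set: wreath](base @* coset_const).
Proof.
rewrite sdprodE ?top_norm_coset_const //; last first.
  apply/eqP; rewrite -subG1 -(im_sdpair_TI rshift_groupAction).
  by apply: setISS; apply/morphimS/subsetT.
apply/eqP; rewrite eqEsubset mul_subG ?subsetI ?subsetT ?normG
  ?top_norm_coset_const //=.
apply/subsetP=> u /setIP[_ /norm_shift_conj_mem Nu].
have Ka := norm_shift_conj_inK Nu.
rewrite -(normC top_norm_coset_const) (sdpairE u) mem_mulg ?mem_morphim ?in_setT //.
exact: norm_shift_conj_coset_const Ka Nu.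
Qed.

End RegularWreath.

Lemma wreath_norm_quotient_isog (aT kT : finGroupType) (K : {group kT}) :
  'Z([set: aT]) = 1 -> [set: aT] :!=: 1 ->
  exists H : {group wreath aT kT},
    ('N_[set: wreath aT kT](H) / H) \isog K.
Proof.
move=> Z1 ntA; have [-> | ntK] := eqVneq (K :> {set kT}) 1.
  exists [set: wreath aT kT]%G; rewrite (setIidPl (normG _)) trivg_quotient.
  exact/trivial_isog.
exists (sdpair1 (rshift_groupAction aT kT) @* coset_const aT K)%G.
apply: isog_trans (isog_symr (sdprod_isog (norm_coset_const_sdprod Z1 ntA ntK))) _.
exact/isog_symr/sub_isog/injm_sdpair2/subsetT.
Qed.

Theorem mainTheorem3 (g0T : finGroupType) (Gn : nat -> finGroupType)
  (HG0simple : simple [set: g0T]) (HG0nab : ~~ abelian [set: g0T])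
  (Huniv : forall hT : finGroupType,
      exists n : nat, (0 < n)%N /\ exists K : {group Gn n}, [set: hT] \isog K) :
  forall hT : finGroupType,
    exists n N : nat, (0 < n)%N /\ (0 < N)%N /\
      exists (gT : finGroupType) (Gamma M : {group gT}),
        [/\ M <| Gamma,
            M \isog [set: gpow g0T N],
            (Gamma / M) \isog [set: Gn n] &
            exists H : {group gT},
              H \subset Gamma /\ ('N_Gamma(H) / H) \isog [set: hT]].
Proof.
move=> hT; have [n [n_gt0 [K hT_K]]] := Huniv hT.
have Z1 := simple_nonabelian_center1 HG0simple HG0nab.
have [H NH_K] := wreath_norm_quotient_isog K Z1 (nonabelian_nontrivial HG0nab).
exists n, #|Gn n|; do 2!split=> //; first by apply/card_gt0P; exists 1.
exists (wreath g0T (Gn n)), [set: wreath g0T (Gn n)]%G,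
  (sdpair1 (rshift_groupAction g0T (Gn n)) @* setT)%G.
split; [exact: wreath_base_normal | exact: wreath_base_isog_gpow
       | exact: wreath_quotient_base_isog | ].
by exists H; split; [apply: subsetT | apply: isog_trans NH_K (isog_symr hT_K)].
Qed.
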